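(* In the setting described in the context, for any $\boldsymbol{c}=(c_1,c_2)\in\mathbb{Z}_+^2$ with $\boldsymbol{c}\neq\mathbf{0}$, for every $(\boldsymbol{x},j)\in\mathbb{S}_+$, $j'\in S_0$ and $l_1,l_2\in\mathbb{Z}_+$, $$\limsup_{k\to\infty}\frac1k\log\tilde q_{(\boldsymbol{x},j),(kc_1+l_1,kc_2+l_2,j')}\le-\sup_{\boldsymbol{\theta}\in\mathcal{D}_{\boldsymbol{x}}}\langle\boldsymbol{\theta},\boldsymbol{c}\rangle .$$
   Context: Let $S_0=\{1,\dots,s_0\}$ be a finite set. The process $\{\boldsymbol{Y}_n\}=\{(X_{1,n},X_{2,n},J_n)\}$ is a discrete-time Markov chain on $\mathbb{S}=\mathbb{Z}^2\times S_0$ with space-homogeneous skip-free transitions: there are nonnegative $s_0\times s_0$ matrices $A_{k,l}$, $k,l\in\{-1,0,1\}$, with $\sum_{k,l}A_{k,l}$ stochastic, such that $\mathbb{P}(\boldsymbol{Y}_{n+1}=(x_1+k,x_2+l,j')\mid\boldsymbol{Y}_n=(x_1,x_2,j))=[A_{k,l}]_{j,j'}$ (all other transitions have probability $0$). Let $\mathbb{Z}_+$ be the nonnegative integers, $\mathbb{S}_+=\mathbb{Z}_+^2\times S_0$, $\tau=\inf\{n\ge0:\boldsymbol{Y}_n\notin\mathbb{S}_+\}$, and $\tilde q_{\boldsymbol{y},\boldsymbol{y}'}=\mathbb{E}\big(\sum_{n=0}^{\tau-1}1(\boldsymbol{Y}_n=\boldsymbol{y}')\mid\boldsymbol{Y}_0=\boldsymbol{y}\big)$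 for $\boldsymbol{y},\boldsymbol{y}'\in\mathbb{S}_+$. Let $A_{*,*}=\sum_{k,l}A_{k,l}$ with stationary distribution $\boldsymbol\pi_{*,*}$, $A_{i,*}=\sum_kA_{i,k}$, $A_{*,j}=\sum_kA_{k,j}$, $a_1=\boldsymbol{\pi}_{*,*}(A_{1,*}-A_{-1,*})\mathbf{1}$, $a_2=\boldsymbol{\pi}_{*,*}(A_{*,1}-A_{*,-1})\mathbf{1}$. Standing assumptions: $\{\boldsymbol{Y}_n\}$ is irreducible and aperiodic, and $a_1<0$ or $a_2<0$. For $\boldsymbol{x},\boldsymbol{x}'\in\mathbb{Z}_+^2$ let $N_{\boldsymbol{x},\boldsymbol{x}'}=(\tilde q_{(\boldsymbol{x},j),(\boldsymbol{x}',j')};j,j'\in S_0)$ and $\Phi_{\boldsymbol{x}}(\theta_1,\theta_2)=\sum_{k_1,k_2\ge0}e^{k_1\theta_1+k_2\theta_2}N_{\boldsymbol{x},(k_1,k_2)}$; $\mathcal{D}_{\boldsymbol{x}}$ is the interior of $\{(\theta_1,\theta_2)\in\mathbb{R}^2:\Phi_{\boldsymbol{x}}(\theta_1,\theta_2)<\infty \text{ elementwise}\}$. $\langle\cdot,\cdot\rangle$ is the Euclidean inner product. *)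

From HB Require Import structures.
From mathcomp Require Import all_boot all_order all_algebra.
From mathcomp Require Import all_classical all_reals all_analysis.
Set Implicit Arguments. Unset Strict Implicit. Unset Printing Implicit Defensive.
Import Order.TTheory GRing.Theory Num.Theory.
Import numFieldNormedType.Exports.
Local Open Scope classical_set_scope.
Local Open Scope ring_scope.

Section MarkovModulatedRW.
Variable R : realType.
Variable s0 : nat.
(* A i j is the matrix A_{i-1, j-1}, i.e. index 0 <-> -1, 1 <-> 0, 2 <-> +1. *)
Variable A : 'I_3 -> 'I_3 -> 'M[R]_s0.

Definition state := ((int * int) * 'I_s0)%type.

Definition shift (i : 'I_3) : int := (i%:Z - 1)%R.
Definition Im1 : 'I_3 := ord0.
Definition Ip1 : 'I_3 := ord_max.

Definition move (y : state) (i k : 'I_3) (m : 'I_s0) : state :=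
  ((y.1.1 + shift i, y.1.2 + shift k)%R, m).

Fixpoint pn (n : nat) (y y' : state) : R :=
  match n with
  | 0 => (y == y')%:R
  | n.+1 => \sum_(i < 3) \sum_(k < 3) \sum_(m < s0)
              A i k y.2 m * pn n (move y i k m) y'
  end.

Definition inSp (y : state) : bool := (0 <= y.1.1)%R && (0 <= y.1.2)%R.

(* taboo probabilities P(Y_n = y', tau > n | Y_0 = y):
   all of Y_0, ..., Y_n lie in S_+ *)
Fixpoint qn (n : nat) (y y' : state) : R :=
  match n with
  | 0 => (inSp y)%:R * (y == y')%:R
  | n.+1 => (inSp y)%:R * \sum_(i < 3) \sum_(k < 3) \sum_(m < s0)
              A i k y.2 m * qn n (move y i k m) y'
  end.

(* \tilde q_{y,y'} = E(sum_{n < tau} 1(Y_n = y') | Y_0 = y)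
                   = sum_n P(Y_n = y', tau > n | Y_0 = y)  *)
Definition qtilde (y y' : state) : \bar R :=
  (\sum_(0 <= n <oo) (qn n y y')%:E)%E.

Definition irreducible : Prop :=
  forall y y' : state, exists n, 0 < pn n y y'.

Definition aperiodic : Prop :=
  forall (y : state) (d : nat),
    (forall n, (0 < n)%N -> 0 < pn n y y -> (d %| n)%N) -> d = 1%N.

Definition Astar : 'M[R]_s0 := \sum_(i < 3) \sum_(k < 3) A i k.
Definition Arow (i : 'I_3) : 'M[R]_s0 := \sum_(k < 3) A i k.
Definition Acol (k : 'I_3) : 'M[R]_s0 := \sum_(i < 3) A i k.

Definition stationary_distr (pi : 'rV[R]_s0) : Prop :=
  (forall j, 0 <= pi ord0 j) /\ \sum_j pi ord0 j = 1 /\ pi *m Astar = pi.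

Definition drift (pi : 'rV[R]_s0) (M : 'M[R]_s0) : R :=
  \sum_(j < s0) \sum_(j' < s0) pi ord0 j * M j j'.

Definition a1 (pi : 'rV[R]_s0) : R := drift pi (Arow Ip1 - Arow Im1).
Definition a2 (pi : 'rV[R]_s0) : R := drift pi (Acol Ip1 - Acol Im1).

Definition sp_state (x : nat * nat) (j : 'I_s0) : state :=
  ((x.1%:Z, x.2%:Z), j).

Definition Phi_finite (x : nat * nat) (theta : R * R) : Prop :=
  forall j j' : 'I_s0,
    (\esum_(k in [set: nat * nat])
       ((expR (k.1%:R * theta.1 + k.2%:R * theta.2))%:E
         * qtilde (sp_state x j) (sp_state k j')) < +oo)%E.

Definition Dom (x : nat * nat) : set (R * R) :=
  interior [set theta | Phi_finite x theta].

End MarkovModulatedRW.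

(** If [theta] lies in the domain of the moment generating function [Phi_x],
    every term [exp <theta, y> q~(x, y)] of the series defining [Phi_x(theta)]
    is bounded by a constant [M].  Along [y_k = k c + l] this gives
    [log q~(x, y_k) <= log M - k <theta, c> - <theta, l>]; dividing by [k] and
    letting [k -> oo] yields the bound [- <theta, c>], and taking the infimum
    over [theta] proves the theorem. *)
From HB Require Import structures.
From mathcomp Require Import all_boot all_order all_algebra.
From mathcomp Require Import all_classical all_reals all_analysis.
From mathcomp Require Import ring.

Set Implicit Arguments.
Unset Strict Implicit.
Unset Printing Implicit Defensive.
Import Order.TTheory GRing.Theory Num.Theory.
Import numFieldNormedType.Exports.
Local Open Scope classical_set_scope.
Local Open Scope ring_scope.

Section limn_esup_lne.
Variable R : realType.

Lemma cvgn_invn_mulrB (C t : R) : (fun k : nat => k%:R^-1 * C - t) @ \oo --> - t.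
Proof.
rewrite -(cvg_shiftS (fun k : nat => k%:R^-1 * C - t)) /=.
have := cvgB (cvgMr_tmp (b := C) (@cvg_harmonic R)) (cvg_cst t).
by rewrite mul0r sub0r; apply.
Qed.

Local Open Scope ereal_scope.

Lemma le_limn_esup (u v : (\bar R)^nat) :
  (\forall k \near \oo, u k <= v k) -> limn_esup u <= limn_esup v.
Proof.
move=> uv; rewrite !limn_esup_lim.
apply: lee_lim; [exact: is_cvg_esups | exact: is_cvg_esups |].
case: uv => N _ uv; near=> n; apply: ge_ereal_sup => _ [k /= nk <-].
apply: (le_trans (uv k _)); first by rewrite /= (leq_trans _ nk)//; near: n; exists N.
by apply: ereal_sup_ubound; exists k.
Unshelve. all: by end_near. Qed.

Lemma lne_le_lnB (Q : \bar R) (M s : R) :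
  (0 < M)%R -> (expR s)%:E * Q <= M%:E -> lne Q <= (ln M - s)%:E.
Proof.
move=> M0; case: Q => [r| |] hQ; last by rewrite leNye.
- have [r0|r0] := leP r 0%R; first by rewrite le0_lneNy ?lee_fin // leNye.
  rewrite lne_EFin // lee_fin lerBrDr -ler_expR expRD !lnK ?posrE //.
  by rewrite mulrC -lee_fin EFinM.
- by move: hQ; rewrite mulry gtr0_sg ?expR_gt0 // mul1e leye_eq.
Qed.

Lemma limn_esup_invn_lne_le (q : (\bar R)^nat) (M C t : R) : (0 < M)%R ->
  (forall k : nat, (expR (k%:R * t + C))%:E * q k <= M%:E) ->
  limn_esup (fun k : nat => (k%:R^-1)%:E * lne (q k)) <= (- t)%:E.
Proof.
move=> M0 qM.
have ub k : (0 < k)%N ->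
    (k%:R^-1)%:E * lne (q k) <= (k%:R^-1 * (ln M - C) - t)%:E.
  move=> k0; have k_neq0 : (k%:R != 0 :> R)%R by rewrite pnatr_eq0 -lt0n.
  have -> : (k%:R^-1 * (ln M - C) - t = k%:R^-1 * (ln M - (k%:R * t + C)))%R.
    by field.
  rewrite EFinM; apply: lee_wpmul2l; last exact: lne_le_lnB.
  by rewrite lee_fin invr_ge0 ler0n.
have lim_ub : (fun k : nat => (k%:R^-1 * (ln M - C) - t)%:E) @ \oo --> (- t)%:E.
  by apply: cvg_EFin; [exact: nearW | exact: cvgn_invn_mulrB].
rewrite -(cvg_limn_einf_sup lim_ub).2; apply: le_limn_esup.
by exists 1%N => // k; exact: ub.
Qed.

End limn_esup_lne.

Lemma Phi_finite_term_bounded (R : realType) (s0 : nat)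
    (A : 'I_3 -> 'I_3 -> 'M[R]_s0) (x : nat * nat) (theta : R * R) (j j' : 'I_s0) :
  Phi_finite A x theta -> exists2 M : R, 0 < M & forall y : nat * nat,
  ((expR (y.1%:R * theta.1 + y.2%:R * theta.2))%:E
     * qtilde A (sp_state x j) (sp_state y j') <= M%:E)%E.
Proof.
move=> /(_ j j'); set Phi := (\esum_(k in _) _)%E => Phi_fin.
exists (Num.max (fine Phi) 1); first by rewrite lt_max ltr01 orbT.
move=> y; apply: (@le_trans _ _ Phi).
  apply: esum_ge; exists [set y]; last by rewrite fsbig_set1.
  by split; [exact: finite_set1 |].
by case: Phi Phi_fin => [r | | ] //= _; rewrite ?leNye // lee_fin le_max lexx.
Qed.

Theorem proposition2p4 (R : realType) (s0 : nat)
  (A : 'I_3 -> 'I_3 -> 'M[R]_s0) (pi : 'rV[R]_s0) :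
  (0 < s0)%N ->
  (forall i k a b, 0 <= A i k a b) ->
  (forall a, \sum_b Astar A a b = 1) ->
  irreducible A -> aperiodic A ->
  stationary_distr A pi ->
  (a1 A pi < 0 \/ a2 A pi < 0) ->
  forall c1 c2 : nat, (c1, c2) != (0%N, 0%N) ->
  forall (x : nat * nat) (j j' : 'I_s0) (l1 l2 : nat),
  (limn_esup (fun k : nat =>
       (k%:R^-1)%:E *
       lne (qtilde A (sp_state x j) (sp_state (k * c1 + l1, k * c2 + l2)%N j')))
   <= - ereal_sup [set (theta.1 * c1%:R + theta.2 * c2%:R)%:E
                   | theta in Dom A x])%E.
Proof.
move=> _ _ _ _ _ _ _ c1 c2 _ x j j' l1 l2.
rewrite leeNr; apply: ge_ereal_sup => _ [theta /interior_subset Phi_fin <-].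
have [M M0 bounded] := Phi_finite_term_bounded j j' Phi_fin.
rewrite leeNr; apply: (limn_esup_invn_lne_le (C := l1%:R * theta.1 + l2%:R * theta.2) M0).
move=> k; have -> : (k%:R * (theta.1 * c1%:R + theta.2 * c2%:R)
    + (l1%:R * theta.1 + l2%:R * theta.2)
    = (k * c1 + l1)%N%:R * theta.1 + (k * c2 + l2)%N%:R * theta.2)%R.
  by rewrite !natrD !natrM; ring.
exact: bounded.
Qed.
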